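(* Let $r\in\mathbb{N}$. Every bounded Borel measurable sigmoidal function $\sigma:\mathbb{R}\to\mathbb{R}$ is discriminatory (for $r$). In particular, every continuous sigmoidal function is discriminatory.
   Context: A function $\sigma:\mathbb{R}\to\mathbb{R}$ is sigmoidal if $\sigma(t)\to1$ as $t\to+\infty$ and $\sigma(t)\to0$ as $t\to-\infty$. For a nonempty compact $X\subset\mathbb{R}^r$, $M(X)$ is the set of regular signed Borel measures on $X$ (finite signed measures whose positive and negative variations are regular Borel measures). $\sigma$ is discriminatory (for $r$) if for every nonempty compact $X\subset\mathbb{R}^r$ and every $\mu\in M(X)$: if $\int_X\sigma(m^{\mathrm T}x+k)\,d\mu(x)=0$ for all $m\in\mathbb{Z}^r$, $k\in\mathbb{Z}$, then $\mu=0$. *)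

From HB Require Import structures.
From mathcomp Require Import all_boot all_order all_algebra.
From mathcomp Require Import all_classical all_reals all_analysis.
Set Implicit Arguments. Unset Strict Implicit. Unset Printing Implicit Defensive.
Import Order.TTheory GRing.Theory Num.Theory.
Import numFieldNormedType.Exports.
Local Open Scope classical_set_scope.
Local Open Scope ring_scope.

Definition borelRn (R : realType) (r : nat) :=
  g_sigma_algebraType (@open 'rV[R]_r).

Definition sigmoidal (R : realType) (sigma : R -> R) : Prop :=
  (sigma x @[x --> +oo] --> (1 : R)) /\ (sigma x @[x --> -oo] --> (0 : R)).

Definition zdot (R : realType) (r : nat) (m : 'rV[int]_r) (x : 'rV[R]_r) : R :=
  \sum_(i < r) (m ord0 i)%:~R * x ord0 i.

Definition regular_measure (R : realType) (r : nat)
    (mu : {finite_measure set (borelRn R r) -> \bar R}) : Prop :=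
  forall A : set (borelRn R r), measurable A ->
    mu A = ereal_inf [set mu U | U in [set U : set 'rV[R]_r | open U /\ A `<=` U]]
    /\ mu A = ereal_sup [set mu K | K in [set K : set 'rV[R]_r | compact K /\ K `<=` A]].

(* A regular signed Borel measure on the compact set X is represented as
   mu = mu1 - mu2 with mu1, mu2 finite regular Borel measures on R^r
   concentrated on X (a Jordan-type decomposition).  Then
   int_X f dmu = int_X f dmu1 - int_X f dmu2, and mu = 0 iff mu1 A = mu2 A
   for every Borel A. *)
Definition discriminatory (R : realType) (r : nat) (sigma : R -> R) : Prop :=
  forall (X : set 'rV[R]_r), X !=set0 -> compact X ->
  forall (mu1 mu2 : {finite_measure set (borelRn R r) -> \bar R}),
    regular_measure mu1 -> regular_measure mu2 ->
    mu1 (~` X) = 0%E -> mu2 (~` X) = 0%E ->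
    (forall (m : 'rV[int]_r) (k : int),
       (\int[mu1]_(x in X) (sigma (zdot m x + k%:~R))%:E =
        \int[mu2]_(x in X) (sigma (zdot m x + k%:~R))%:E)%E) ->
    forall A : set (borelRn R r), measurable A -> mu1 A = mu2 A.

(* The hypothesis is used through sigma(n (n m.x - floor(c n) - 2)), an
   integral affine form of x, which tends to the indicator of the half-space
   {m.x > c} as n -> oo; by dominated convergence mu1 and mu2 agree on all
   half-spaces with integral normal m.  Hence the pushforwards of mu1, mu2 by
   x |-> m.x agree, and so do the integrals of exp(m.x); since
   exp(m.x) exp(m'.x) = exp((m + m').x), mu1 and mu2 integrate alike every
   exponential polynomial sum_j a_j exp(m_j.x).  On the compact set X, a
   polynomial in exp(m.x) approximates the indicator of {m.x < a} boundedly
   pointwise, so products of these give the open boxes (the balls of the sup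
   norm) and their finite unions, which mu1 and mu2 therefore measure alike.
   Inner regularity extends this to open sets, and uniqueness of measures
   agreeing on the pi-system of open sets to all Borel sets.  A continuous
   sigmoidal function is bounded and measurable. *)

From HB Require Import structures.
From mathcomp Require Import all_boot all_order all_algebra.
From mathcomp Require Import all_classical all_reals all_analysis.
From mathcomp Require Import measurable_realfun.
From mathcomp Require Import ring lra.
Set Implicit Arguments. Unset Strict Implicit. Unset Printing Implicit Defensive.
Import Order.TTheory GRing.Theory Num.Theory.
Import numFieldNormedType.Exports.
Local Open Scope classical_set_scope.
Local Open Scope ring_scope.

Section step_polynomial.
Variable R : realType.
Implicit Types (x y h q u : R) (n N : nat).

Lemma bernoulli_ineq x N : -1 <= x -> 1 + N%:R * x <= (1 + x) ^+ N.
Proof.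
move=> x_ge; elim: N => [|N IH]; first by rewrite expr0 mul0r addr0.
rewrite exprS -natr1.
have x1_ge0 : 0 <= 1 + x by lra.
have := ler_wpM2l x1_ge0 IH.
have : 0 <= N%:R * x ^+ 2 by rewrite mulr_ge0 ?sqr_ge0.
rewrite expr2; lra.
Qed.

Lemma bernoulli_ineq_sub y N : 0 <= y <= 1 -> (1 - y) ^+ N * (1 + N%:R * y) <= 1.
Proof.
move=> /andP[y0 y1].
have y1_ge0 : 0 <= (1 - y) ^+ N by apply: exprn_ge0; lra.
have y_ge : -1 <= y by lra.
apply: le_trans (ler_wpM2l y1_ge0 (bernoulli_ineq N y_ge)) _.
by rewrite -exprMn; apply: exprn_ile1; nra.
Qed.

Lemma binomial_quadratic_ler h n : 0 <= h ->
  n%:R * (n%:R - 1) / 2 * h ^+ 2 <= (1 + h) ^+ n.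
Proof.
move=> h0.
suff : 1 + n%:R * h + n%:R * (n%:R - 1) / 2 * h ^+ 2 <= (1 + h) ^+ n.
  have : 0 <= n%:R * h :> R by rewrite mulr_ge0.
  lra.
elim: n => [|n IH]; first by rewrite expr0 !mul0r; lra.
rewrite exprS -natr1.
have h1 : 0 <= 1 + h by lra.
have := ler_wpM2l h1 IH.
have nn1 : 0 <= n%:R * (n%:R - 1) :> R.
  by case: n {IH} => [|n]; rewrite ?mul0r // -natr1 addrK mulr_ge0.
have : 0 <= n%:R * (n%:R - 1) / 2 * h ^+ 3 :> R.
  by apply: mulr_ge0; rewrite ?exprn_ge0 // divr_ge0.
rewrite !expr2 !exprS expr0 mulr1; lra.
Qed.

Lemma cvg_natr_mul_expr q : 0 <= q < 1 -> n%:R * q ^+ n @[n --> \oo] --> 0.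
Proof.
move=> /andP[q0 q1].
have [->|q_neq0] := eqVneq q 0.
  apply: cvg_near_cst; near=> n.
  by rewrite expr0n gtn_eqF ?mulr0 //; near: n; exists 1%N.
have q_gt0 : 0 < q by rewrite lt_def q_neq0 q0.
pose h := q^-1 - 1.
have h_gt0 : 0 < h by rewrite /h subr_gt0 invf_gt1.
have h2_gt0 : 0 < h ^+ 2 by rewrite exprn_gt0.
have qh n : q ^+ n * (1 + h) ^+ n = 1 by rewrite -exprMn /h addrC subrK mulfV ?expr1n.
apply/cvgr0Pnorm_le => e e_gt0; near=> n.
rewrite ger0_norm ?mulr_ge0 ?exprn_ge0 //.
have n_large : 2 / (e * h ^+ 2) + 2 <= n%:R.
  by near: n; apply: nbhs_infty_ger; rewrite num_real.
have eh_gt0 : 0 < e * h ^+ 2 by rewrite mulr_gt0.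
have n1_gt0 : 0 < (n%:R - 1) * h ^+ 2.
  rewrite mulr_gt0 // subr_gt0.
  have : 0 <= 2 / (e * h ^+ 2) by rewrite divr_ge0 // ltW.
  lra.
(* n q^n = n / (1 + h)^n <= n / (n (n - 1) h^2 / 2) = 2 / ((n - 1) h^2) <= e *)
have qn_bound : q ^+ n * (n%:R * (n%:R - 1) / 2 * h ^+ 2) <= 1.
  by rewrite -[leRHS](qh n) ler_pM2l ?exprn_gt0 // binomial_quadratic_ler // ltW.
have e_large : 2 <= e * h ^+ 2 * (n%:R - 1) by rewrite -ler_pdivrMl //; lra.
rewrite -(ler_pM2r n1_gt0).
have -> : n%:R * q ^+ n * ((n%:R - 1) * h ^+ 2) =
   2 * (q ^+ n * (n%:R * (n%:R - 1) / 2 * h ^+ 2)) by field.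
have : e * h ^+ 2 * (n%:R - 1) = e * ((n%:R - 1) * h ^+ 2) by ring.
lra.
Unshelve. all: by end_near. Qed.

Section step_poly.
Variables (c : R) (K : nat).
Hypotheses (c_gt0 : 0 < c) (K_gt0 : (0 < K)%N).
Local Notation b := (c * K%:R).

(* Since nK^n (u/(cK))^n = n (u/c)^n tends to 0 for u < c and is at least n
   for c <= u, Bernoulli's inequality makes step_poly n converge on [0, cK]
   to the indicator of [0, c). *)
Definition step_poly n : {poly R} := (1 - (b^-1 ^+ n) *: 'X^n) ^+ (n * K ^ n).

Let b_gt0 : 0 < b. Proof. by rewrite mulr_gt0 // ltr0n. Qed.

Lemma step_polyE n u : (step_poly n).[u] = (1 - (u / b) ^+ n) ^+ (n * K ^ n).
Proof. by rewrite /step_poly !hornerE exprMn mulrC. Qed.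

Lemma step_poly_exponent n u :
  (n * K ^ n)%:R * (u / b) ^+ n = n%:R * (u / c) ^+ n.
Proof.
rewrite natrM natrX -mulrA -exprMn; congr (_ * _ ^+ _).
by field; rewrite pnatr_eq0 -lt0n K_gt0 gt_eqF.
Qed.

Let ratio_itv n u : 0 <= u <= b -> 0 <= (u / b) ^+ n <= 1.
Proof.
move=> /andP[u0 ub]; rewrite exprn_ge0 ?divr_ge0 ?(ltW b_gt0) //=.
by rewrite exprn_ile1 ?divr_ge0 ?(ltW b_gt0) // ler_pdivrMr // mul1r.
Qed.

Lemma step_poly_itv n u : 0 <= u <= b -> 0 <= (step_poly n).[u] <= 1.
Proof.
move=> /(ratio_itv n) /andP[y0 y1]; rewrite step_polyE.
by rewrite exprn_ge0 ?exprn_ile1 //; lra.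
Qed.

Lemma step_poly_cvg1 u : 0 <= u < c -> (step_poly n).[u] @[n --> \oo] --> (1 : R).
Proof.
move=> /andP[u0 uc].
have ub : 0 <= u <= b by rewrite u0 (le_trans (ltW uc)) // ler_peMr ?ler1n // ltW.
apply: (@squeeze_cvgr _ _ _ _ (fun n => 1 - n%:R * (u / c) ^+ n) (fun=> 1)).
- near=> n; have /andP[_ ->] := step_poly_itv n ub; rewrite andbT.
  rewrite step_polyE -step_poly_exponent.
  have /andP[y0 y1] := ratio_itv n ub.
  have := bernoulli_ineq (n * K ^ n) (_ : -1 <= - (u / b) ^+ n).
  by rewrite mulrN; apply; lra.
- rewrite -[X in _ --> X]subr0; apply: cvgB; first exact: cvg_cst.
  by apply: cvg_natr_mul_expr; rewrite divr_ge0 ?(ltW c_gt0) // ltr_pdivrMr // mul1r.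
- exact: cvg_cst.
Unshelve. all: by end_near. Qed.

Lemma step_poly_cvg0 u : c <= u <= b -> (step_poly n).[u] @[n --> \oo] --> (0 : R).
Proof.
move=> /andP[cu ub].
have ub' : 0 <= u <= b by rewrite ub andbT (le_trans (ltW c_gt0)).
apply: (@squeeze_cvgr _ _ _ _ (fun=> 0) harmonic); last exact: cvg_harmonic.
- near=> n; have /andP[s0 _] := step_poly_itv n ub'; rewrite s0 /=.
  have := bernoulli_ineq_sub (n * K ^ n) (ratio_itv n ub').
  rewrite -step_polyE step_poly_exponent.
  have : n%:R <= n%:R * (u / c) ^+ n :> R.
    by rewrite ler_peMr // exprn_ege1 // ler_pdivlMr // mul1r.
  rewrite /harmonic /= -[n.+1%:R^-1]mul1r ler_pdivlMr // -natr1.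
  set s := (step_poly n).[u] => ? ?.
  have : s * (n%:R + 1) <= s * (1 + n%:R * (u / c) ^+ n) by rewrite ler_wpM2l //; lra.
  lra.
- exact: cvg_cst.
Unshelve. all: by end_near. Qed.

End step_poly.
End step_polynomial.

Lemma compact_continuous_bounded (T : topologicalType) (R : realType)
    (f : T -> R) (A : set T) :
  compact A -> continuous f -> exists M, forall x, A x -> `|f x| <= M.
Proof.
move=> cA cf.
have /ex_strict_bound_gt0[M _ fM] : bounded_set (f @` A).
  by apply/compact_bounded/continuous_compact => //; exact: continuous_subspaceT.
by exists M => x Ax; apply/ltW/fM; exact: imageP.
Qed.

Section euclidean.
Variables (R : realType) (r : nat).
Implicit Types (m : 'rV[int]_r) (x : 'rV[R]_r).

Lemma continuous_measurable_borelRn (f : 'rV[R]_r -> R) :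
  continuous f -> measurable_fun [set: borelRn R r] f.
Proof.
move=> cf; apply: (measurability _ (RGenOInfty.measurableE R)).
move=> _ [_ [c ->] <-]; apply: sub_sigma_algebra; rewrite setTI.
by apply: open_comp; [move=> x _; exact: cf | exact: rray_open].
Qed.

Lemma compact_measurable_borelRn (K : set 'rV[R]_r) :
  compact K -> measurable (K : set (borelRn R r)).
Proof.
move=> /(compact_closed (@norm_hausdorff R _)) clK.
rewrite -[K]setCK; apply: measurableC; apply: sub_sigma_algebra.
by rewrite openC.
Qed.

Lemma zdot_continuous m : continuous (zdot m : 'rV[R]_r -> R).
Proof.
rewrite /zdot; apply: continuous_big => [|i _ x]; first exact: add_continuous.
by apply: continuousM; [exact: cst_continuous | exact: coord_continuous].
Qed.

Lemma measurable_zdot m : measurable_fun [set: borelRn R r] (zdot m : _ -> R).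
Proof. by apply: continuous_measurable_borelRn; exact: zdot_continuous. Qed.

Lemma zdotD m1 m2 x : zdot (m1 + m2) x = zdot m1 x + zdot m2 x.
Proof. by rewrite /zdot -big_split; apply: eq_bigr => i _; rewrite mxE intrD mulrDl. Qed.

Lemma zdot0 x : zdot 0 x = 0.
Proof. by rewrite /zdot big1 // => i _; rewrite mxE mul0r. Qed.

Lemma zdotZ (a : int) m x : zdot (a *: m) x = a%:~R * zdot m x.
Proof. by rewrite /zdot mulr_sumr; apply: eq_bigr => i _; rewrite mxE intrM mulrA. Qed.

Lemma zdot_delta i x : zdot (delta_mx 0 i) x = x 0 i.
Proof.
rewrite /zdot (bigD1 i) //= big1 ?addr0 => [|j /negbTE ji]; rewrite mxE eqxx.
  by rewrite mul1r.
by rewrite ji mul0r.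
Qed.

Definition exp_poly (f : 'rV[R]_r -> R) := exists s : seq ('rV[int]_r * R),
  forall x, f x = \sum_(p <- s) p.2 * expR (zdot p.1 x).

Lemma exp_poly_cst a : exp_poly (fun=> a).
Proof. by exists [:: (0, a)] => x; rewrite big_seq1 zdot0 expR0 mulr1. Qed.

Lemma exp_polyD f g : exp_poly f -> exp_poly g -> exp_poly (f \+ g).
Proof. by move=> [s fs] [t gt]; exists (s ++ t) => x; rewrite big_cat /= fs gt. Qed.

Lemma exp_polyM f g : exp_poly f -> exp_poly g -> exp_poly (f \* g).
Proof.
move=> [s fs] [t gt]; exists [seq (p.1 + q.1, p.2 * q.2) | p <- s, q <- t] => x.
rewrite /= fs gt big_allpairs_dep mulr_suml; apply: eq_bigr => p _.
by rewrite mulr_sumr; apply: eq_bigr => q _ /=; rewrite zdotD expRD; ring.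
Qed.

Lemma exp_poly_horner (P : {poly R}) m : exp_poly (fun x => P.[expR (zdot m x)]).
Proof.
exists [seq (j%:Z *: m, P`_j) | j <- iota 0 (size P)] => x.
rewrite horner_coef big_map -(big_mkord xpredT (fun j => P`_j * _ ^+ j)).
rewrite /index_iota subn0; apply: eq_bigr => j _ /=.
by rewrite zdotZ -expRM_natl.
Qed.

Lemma measurable_exp_poly f : exp_poly f -> measurable_fun [set: borelRn R r] f.
Proof.
move=> [s fs]; rewrite (funext fs); apply: measurable_sum => p.
apply: measurable_funM; first exact: measurable_cst.
by apply: measurableT_comp; [exact: measurable_expR | exact: measurable_zdot].
Qed.

End euclidean.

Lemma ball_rowE (R : realType) r (y x : 'rV[R]_r) e : 0 < e ->
  ball y e x <-> forall i, `|y 0 i - x 0 i| < e.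
Proof.
move=> e_gt0; split=> [[_ yx] i|yx]; first exact: yx.
by split=> // i j; rewrite ord1; exact: yx.
Qed.

Section exp_poly_limit.
Variables (R : realType) (r : nat) (X : set 'rV[R]_r).
Hypothesis cX : compact X.
Implicit Types (f g : 'rV[R]_r -> R) (m : 'rV[int]_r).

Definition exp_poly_limit f := exists F : nat -> 'rV[R]_r -> R,
  [/\ forall n, exp_poly (F n),
      exists M, forall n x, X x -> `|F n x| <= M &
      forall x, X x -> F n x @[n --> \oo] --> f x].

Lemma exp_poly_limit_eq f g :
  exp_poly_limit f -> (forall x, X x -> f x = g x) -> exp_poly_limit g.
Proof.
move=> [F [FE FM Ff]] fg; exists F; split=> // x Xx.
by rewrite -fg //; exact: Ff.
Qed.

Lemma exp_poly_limit_cst a : exp_poly_limit (fun=> a).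
Proof.
exists (fun _ _ => a); split=> [n||x _]; [exact: exp_poly_cst | | exact: cvg_cst].
by exists `|a|.
Qed.

Lemma exp_poly_limitD f g :
  exp_poly_limit f -> exp_poly_limit g -> exp_poly_limit (f \+ g).
Proof.
move=> [F [FE [M FM] Ff]] [G [GE [N GN] Gg]].
exists (fun n => F n \+ G n); split=> [n||x Xx]; first exact: exp_polyD.
- exists (M + N) => n x Xx; apply: le_trans (ler_normD _ _) _.
  by rewrite lerD ?FM ?GN.
- by apply: cvgD; [exact: Ff | exact: Gg].
Qed.

Lemma exp_poly_limitM f g :
  exp_poly_limit f -> exp_poly_limit g -> exp_poly_limit (f \* g).
Proof.
move=> [F [FE [M FM] Ff]] [G [GE [N GN] Gg]].
exists (fun n => F n \* G n); split=> [n||x Xx]; first exact: exp_polyM.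
- by exists (M * N) => n x Xx; rewrite normrM ler_pM ?FM ?GN.
- by apply: cvgM; [exact: Ff | exact: Gg].
Qed.

Lemma exp_poly_limit_prod (I : Type) (s : seq I) (F : I -> 'rV[R]_r -> R) :
  (forall i, exp_poly_limit (F i)) -> exp_poly_limit (fun x => \prod_(i <- s) F i x).
Proof.
move=> FL; elim: s => [|i s IH].
  by apply: (exp_poly_limit_eq (@exp_poly_limit_cst 1)) => x _; rewrite big_nil.
by apply: (exp_poly_limit_eq (exp_poly_limitM (FL i) IH)) => x _; rewrite big_cons.
Qed.

Lemma exp_poly_limit_lt m (a : R) : exp_poly_limit (fun x => if zdot m x < a then 1 else 0).
Proof.
have [B zB] := compact_continuous_bounded cX (@zdot_continuous _ _ m).
pose c := expR a; pose K := (Num.trunc (expR B / c)).+1.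
have c_gt0 : 0 < c by rewrite expR_gt0.
have u_itv x : X x -> 0 <= expR (zdot m x) <= c * K%:R.
  move=> Xx; rewrite expR_ge0 /=; apply/ltW/(@le_lt_trans _ _ (expR B)).
    by rewrite ler_expR (le_trans (ler_norm _)) ?zB.
  by rewrite mulrC -ltr_pdivrMr // truncnS_gt.
exists (fun n x => (step_poly c K n).[expR (zdot m x)]); split=> [n||x Xx].
- exact: exp_poly_horner.
- exists 1 => n x Xx; have /andP[s0 s1] := step_poly_itv c_gt0 (ltn0Sn _) n (u_itv x Xx).
  by rewrite ger0_norm.
- have /andP[u0 uK] := u_itv x Xx; case: ltrP => [za|az].
  + by apply: step_poly_cvg1 => //; rewrite u0 ltr_expR.
  + by apply: step_poly_cvg0 => //; rewrite uK andbT /c ler_expR.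
Qed.

Lemma exp_poly_limit_ball y e : 0 < e -> exp_poly_limit \1_(ball y e).
Proof.
move=> e_gt0.
pose g i x : R := (if zdot (delta_mx 0 i) x < y 0 i + e then 1 else 0) *
                  (if zdot (- delta_mx 0 i) x < e - y 0 i then 1 else 0).
have gE i x : g i x = if `|y 0 i - x 0 i| < e then 1 else 0.
  rewrite /g -scaleN1r zdotZ !zdot_delta mulN1r ltr_distlC ltrNl opprB.
  by case: (y 0 i - e < x 0 i); case: (x 0 i < y 0 i + e); rewrite ?mulr1 ?mulr0.
have gL i : exp_poly_limit (g i) by apply: exp_poly_limitM; exact: exp_poly_limit_lt.
apply: (exp_poly_limit_eq (exp_poly_limit_prod (index_enum 'I_r) gL)) => x _.
rewrite indicE; under eq_bigr do rewrite gE.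
have [bx|nbx] := pselect (ball y e x).
- by rewrite mem_set // big1 // => i _; rewrite ifT //; exact: (ball_rowE _ _ e_gt0).1 bx i.
- have [i /negP/negbTE yx] : exists i, ~ `|y 0 i - x 0 i| < e.
    by apply/existsNP => yx; apply/nbx/(ball_rowE _ _ e_gt0).
  by rewrite memNset // (bigD1 i) //= yx mul0r.
Qed.

Lemma exp_poly_limit_setU (A B : set 'rV[R]_r) :
  exp_poly_limit \1_A -> exp_poly_limit \1_B -> exp_poly_limit \1_(A `|` B).
Proof.
move=> LA LB.
have LAB := exp_poly_limitD LA (exp_poly_limitD LB
  (exp_poly_limitM (@exp_poly_limit_cst (-1)) (exp_poly_limitM LA LB))).
apply: (exp_poly_limit_eq LAB) => x _; rewrite /= !indicE in_setU.
by case: (x \in A); case: (x \in B); rewrite /=; ring.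
Qed.

Lemma exp_poly_limit_bigsetU (I : Type) (s : seq I) (A : I -> set 'rV[R]_r) :
  (forall i, exp_poly_limit \1_(A i)) ->
  exp_poly_limit \1_(\big[setU/set0]_(i <- s) A i).
Proof.
move=> LA; elim: s => [|i s IH]; last by rewrite big_cons; exact: exp_poly_limit_setU.
rewrite big_nil; apply: (exp_poly_limit_eq (@exp_poly_limit_cst 0)) => x _.
by rewrite indicE in_set0.
Qed.

End exp_poly_limit.

Section steep_ramp.
Variable R : realType.
Implicit Types (c s : R).

(* For s = m.x with m integral, this is an affine form of x with integral
   coefficients. *)
Definition steep_ramp c s n : R :=
  n%:R * (n%:R * s - ((Num.floor (c * n%:R))%:~R + 2)).

Lemma steep_ramp_cvgy c s : c < s -> steep_ramp c s n @[n --> \oo] --> +oo.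
Proof.
move=> cs; apply/cvgryPge => A; near=> n.
have n_ge1 : 1 <= n%:R * (s - c) - 2.
  have : 3 / (s - c) <= n%:R by near: n; apply: nbhs_infty_ger; rewrite num_real.
  by rewrite ler_pdivrMr ?subr_gt0 //; lra.
have An : A <= n%:R.
  by near: n; apply: nbhs_infty_ger; rewrite num_real.
have := floor_le (c * n%:R); rewrite /steep_ramp.
set F := (Num.floor _)%:~R => Fc.
have : n%:R <= n%:R * (n%:R * s - (F + 2)) by rewrite ler_peMr //; lra.
lra.
Unshelve. all: by end_near. Qed.

Lemma steep_ramp_cvgNy c s : s <= c -> steep_ramp c s n @[n --> \oo] --> -oo.
Proof.
move=> sc; apply/cvgrNyPle => A; near=> n.
have An : - A <= n%:R.
  by near: n; apply: nbhs_infty_ger; rewrite num_real.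
have := floorD1_gt (c * n%:R); rewrite /steep_ramp intrD.
set F := (Num.floor _)%:~R => Fc.
have sc_n : n%:R * s <= n%:R * c by rewrite ler_wpM2l.
have : n%:R * (n%:R * s - (F + 2)) <= - n%:R by rewrite -mulrN1 ler_wpM2l //; lra.
lra.
Unshelve. all: by end_near. Qed.

Lemma sigmoidal_steep_ramp_cvg (sigma : R -> R) c s : sigmoidal sigma ->
  sigma (steep_ramp c s n) @[n --> \oo] --> (\1_`]c, +oo[ s : R).
Proof.
move=> [sigma_y sigma_Ny]; rewrite indicE; have [cs|sc] := ltrP c s.
- rewrite mem_set /= ?in_itv /= ?cs //.
  exact: cvg_comp (steep_ramp_cvgy cs) sigma_y.
- rewrite memNset; first exact: cvg_comp (steep_ramp_cvgNy sc) sigma_Ny.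
  by rewrite /= in_itv /= andbT; apply/negP; rewrite -leNgt.
Qed.

End steep_ramp.

Section null_complement.
Context d (T : measurableType d) (R : realType) (mu : {measure set T -> \bar R}).
Variable X : set T.
Hypotheses (mX : measurable X) (muXC : mu (~` X) = 0%E).

Lemma measure_setIr_null_setC A : measurable A -> mu A = mu (A `&` X).
Proof.
move=> mA; rewrite (measureDI mu mA mX) -[RHS]add0e; congr (_ + _)%E.
exact: (subset_measure0 (measurableD mA mX) (measurableC mX)).
Qed.

Lemma integral_null_setC (f : T -> \bar R) : measurable_fun [set: T] f ->
  (\int[mu]_(x in X) f x = \int[mu]_x f x)%E.
Proof.
move=> mf; rewrite -(setUv X) integral_setU //; last 3 first.
- exact: measurableC.
- by rewrite setUv.
- by rewrite disj_set2E setICr.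
by rewrite (null_set_integral (measurableC mX) (measurable_funS measurableT _ mf) muXC) ?adde0.
Qed.

End null_complement.

Lemma regular_open_le (R : realType) (r : nat)
    (mu nu : {finite_measure set (borelRn R r) -> \bar R}) :
  regular_measure mu ->
  (forall (s : seq 'rV[R]_r) (e : 'rV[R]_r -> R), (forall y, 0 < e y) ->
     mu (\big[setU/set0]_(y <- s) ball y (e y)) = nu (\big[setU/set0]_(y <- s) ball y (e y))) ->
  forall U : set 'rV[R]_r, open U -> (mu U <= nu U)%E.
Proof.
move=> mu_reg mu_nu U oU.
rewrite (mu_reg U (sub_sigma_algebra oU)).2; apply: ge_ereal_sup => _ [K [cK KU] <-].
have [e e_gt0 eU] : exists2 e : 'rV[R]_r -> R, forall y, 0 < e y &
    forall y, U y -> ball y (e y) `<=` U.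
  have /choice[e he] (y : 'rV[R]_r) : exists e : R, 0 < e /\ (U y -> ball y e `<=` U).
    have [Uy|] := pselect (U y); last by exists 1.
    by have /nbhs_ballP[e e_gt0 yeU] := open_nbhs_nbhs (conj oU Uy); exists e.
  by exists e => y; have [] := he y.
have K_balls : K `<=` cover K (fun y => ball y (e y)).
  by move=> x Kx; exists x => //; exact: ballxx.
have mK : measurable (K : set (borelRn R r)) by exact: compact_measurable_borelRn.
move: cK; rewrite compact_cover => /(_ _ K _ (fun y _ => ball_open y (e y)) K_balls).
move=> [D DK KD].
set W := \big[setU/set0]_(y <- finmap.enum_fset D) ball y (e y).
have KW : K `<=` W by rewrite /W -bigcup_fset.
have WU : W `<=` U.
  rewrite /W -bigcup_fset => x [y /= yD]; apply: eU; apply: KU.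
  by have := DK y yD; rewrite inE.
have mW : measurable (W : set (borelRn R r)).
  by apply: bigsetU_measurable => y _; apply: sub_sigma_algebra; exact: ball_open.
apply: (@le_trans _ _ (mu W)); first by rewrite le_measure ?inE.
by rewrite mu_nu // le_measure ?inE //; exact: sub_sigma_algebra.
Qed.

Section measures_on_compact.
Variables (R : realType) (r : nat) (X : set 'rV[R]_r).
Hypothesis cX : compact X.
Variables mu1 mu2 : {finite_measure set (borelRn R r) -> \bar R}.
Hypotheses (mu1XC : mu1 (~` X) = 0%E) (mu2XC : mu2 (~` X) = 0%E).
Local Notation T := (borelRn R r).
Local Notation halfspace m c := (zdot m @^-1` `]c, +oo[ : set T).

Let mX : measurable (X : set T). Proof. exact: compact_measurable_borelRn. Qed.

Let measurable_halfspace m c : measurable (halfspace m c).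
Proof. by rewrite -[_ @^-1` _]setTI; apply: measurable_zdot => //; exact: measurable_itv. Qed.

Lemma sigmoidal_halfspace_eq (sigma : R -> R) :
  (exists M : R, forall t, `|sigma t| <= M) -> measurable_fun [set: R] sigma ->
  sigmoidal sigma ->
  (forall (m : 'rV[int]_r) (k : int),
     (\int[mu1]_(x in X) (sigma (zdot m x + k%:~R))%:E =
      \int[mu2]_(x in X) (sigma (zdot m x + k%:~R))%:E)%E) ->
  forall m c, mu1 (halfspace m c) = mu2 (halfspace m c).
Proof.
move=> [M sigmaM] msigma ssigma hsigma m c.
pose w n : 'rV[int]_r := (n * n)%N%:Z *: m.
pose k n : int := - (n%:Z * (Num.floor (c * n%:R) + 2)).
have wkE n x : zdot (w n) x + (k n)%:~R = steep_ramp c (zdot m x) n.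
  by rewrite zdotZ /steep_ramp intrN intrM intrD -!pmulrn natrM natrD; ring.
have lim (mu : {finite_measure set T -> \bar R}) : mu (~` X) = 0%E ->
    (\int[mu]_(x in X) (sigma (zdot (w n) x + (k n)%:~R))%:E)%E @[n --> \oo] -->
    mu (halfspace m c).
  move=> muXC; rewrite (measure_setIr_null_setC mX muXC) // -integral_indic //.
  apply: (@dominated_cvg _ _ _ mu _ mX _ _ (fun=> M%:E)) => //.
  - move=> n; apply/measurable_EFinP/(measurable_funS measurableT) => //.
    apply: measurableT_comp => //; apply: measurable_funD => //.
    exact: measurable_zdot.
  - move=> x _; under eq_cvg do rewrite wkE.
    by apply: cvg_EFin; [exact: nearW | exact: sigmoidal_steep_ramp_cvg].
  - exact: finite_measure_integrable_cst.
  - by move=> n x _; rewrite lee_fin.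
have := lim mu1 mu1XC; under eq_cvg do rewrite hsigma.
by move=> lim1; exact: cvg_unique _ lim1 (lim _ mu2XC).
Qed.

Section halfspaces_determine.
Hypothesis halfspace_eq : forall m c, mu1 (halfspace m c) = mu2 (halfspace m c).

Lemma pushforward_zdot_eq m (A : set R) : measurable A ->
  pushforward mu1 (zdot m : T -> R) A = pushforward mu2 (zdot m : T -> R) A.
Proof.
have mz := @measurable_zdot R r m.
pose g k : set R := `](- k%:R), +oo[%classic.
apply: (measure_unique (RGenOInfty.G (R:=R)) g (RGenOInfty.measurableE R) _ _ _
  (pushforward mu1 (zdot m : T -> R)) (pushforward mu2 (zdot m : T -> R))).
- move=> _ _ [x ->] [y ->]; exists (Num.max x y).
  apply/seteqP; split=> z /=.
  + by case; rewrite /= !in_itv /= !andbT gt_max => -> ->.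
  + by rewrite /= in_itv /= andbT gt_max => /andP[xz yz]; rewrite /= !in_itv /= xz yz.
- by move=> k; exists (- k%:R).
- apply/seteqP; split=> // z _; exists (Num.trunc `|z|).+1 => //=.
  rewrite /g /= in_itv /= andbT ltrNl (le_lt_trans _ (truncnS_gt _)) //.
  by rewrite ler_normr lexx orbT.
- by move=> _ [c ->]; exact: halfspace_eq.
- move=> k; rewrite /pushforward ltey_eq fin_num_measure //.
  by rewrite -[_ @^-1` _]setTI; apply: measurable_zdot => //; exact: measurable_itv.
Qed.

Lemma integral_expR_zdot_eq m :
  (\int[mu1]_(x in X) (expR (zdot m x))%:E = \int[mu2]_(x in X) (expR (zdot m x))%:E)%E.
Proof.
have mexp : measurable_fun [set: R] (fun y : R => (expR y)%:E).
  by apply/measurable_EFinP; exact: measurable_expR.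
have mexpz : measurable_fun [set: T] (fun x : T => (expR (zdot m x))%:E).
  by apply: measurableT_comp mexp (measurable_zdot _).
rewrite (integral_null_setC mX mu1XC mexpz) (integral_null_setC mX mu2XC mexpz).
have mz := @measurable_zdot R r m.
have expR_ge0' : {in [set: R], forall y, (0 <= (expR y)%:E)%E}.
  by move=> y _; rewrite lee_fin expR_ge0.
have push (mu : {finite_measure set T -> \bar R}) :
    (\int[pushforward mu (zdot m : T -> R)]_y (expR y)%:E = \int[mu]_x (expR (zdot m x))%:E)%E.
  by rewrite (ge0_integral_pushforward mz _ measurableT mexp expR_ge0') preimage_setT.
rewrite -!push; apply: eq_measure_integral => A mA _; exact: pushforward_zdot_eq.
Qed.

Let integrable_bounded (mu : {finite_measure set T -> \bar R}) (f : T -> R) M :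
  measurable_fun [set: T] f -> (forall x, X x -> `|f x| <= M) ->
  mu.-integrable X (EFin \o f).
Proof.
move=> mf fM; apply: le_integrable (finite_measure_integrable_cst mu M mX) => //.
- by apply/measurable_EFinP; exact: measurable_funS mf.
- by move=> x Xx /=; rewrite lee_fin (le_trans (fM x Xx)) ?ler_norm.
Qed.

Let integrable_expR_zdot (mu : {finite_measure set T -> \bar R}) m :
  mu.-integrable X (fun x => (expR (zdot m x))%:E).
Proof.
have [B zB] := compact_continuous_bounded cX (@zdot_continuous _ _ m).
apply: (@integrable_bounded _ (fun x => expR (zdot m x)) (expR B)).
  by apply: measurableT_comp; [exact: measurable_expR | exact: measurable_zdot].
by move=> x Xx; rewrite ger0_norm ?expR_ge0 // ler_expR (le_trans (ler_norm _)) ?zB.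
Qed.

Lemma integral_exp_poly_eq f : exp_poly f ->
  (\int[mu1]_(x in X) (f x)%:E = \int[mu2]_(x in X) (f x)%:E)%E.
Proof.
move=> [s fs].
have fE (mu : {finite_measure set T -> \bar R}) : (\int[mu]_(x in X) (f x)%:E =
    \sum_(p <- s) (p.2%:E * \int[mu]_(x in X) (expR (zdot p.1 x))%:E))%E.
  under eq_integral do rewrite fs -sumEFin.
  rewrite integral_sum //; last first.
    move=> p; under eq_fun do rewrite EFinM.
    exact: (integrableZl mX p.2 (integrable_expR_zdot mu p.1)).
  apply: eq_bigr => p _; under eq_integral do rewrite EFinM.
  by rewrite (integralZl mX (integrable_expR_zdot mu p.1)).
by rewrite !fE; apply: eq_bigr => p _; rewrite integral_expR_zdot_eq.
Qed.

Lemma integral_exp_poly_limit_eq f : exp_poly_limit X f ->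
  (\int[mu1]_(x in X) (f x)%:E = \int[mu2]_(x in X) (f x)%:E)%E.
Proof.
move=> [F [FE [M FM] Ff]].
have lim (mu : {finite_measure set T -> \bar R}) :
    (\int[mu]_(x in X) (F n x)%:E)%E @[n --> \oo] --> (\int[mu]_(x in X) (f x)%:E)%E.
  apply: (@dominated_cvg _ _ _ mu _ mX _ _ (fun=> M%:E)) => //.
  - move=> n; apply/measurable_EFinP/(measurable_funS measurableT) => //.
    exact: measurable_exp_poly.
  - by move=> x Xx; apply: cvg_EFin; [exact: nearW | exact: Ff].
  - exact: finite_measure_integrable_cst.
have := lim mu1; under eq_cvg do rewrite (integral_exp_poly_eq (FE _)).
by move=> lim1; exact: cvg_unique _ lim1 (lim mu2).
Qed.

Lemma measure_bigsetU_ball_eq (s : seq 'rV[R]_r) (e : 'rV[R]_r -> R) :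
  (forall y, 0 < e y) ->
  mu1 (\big[setU/set0]_(y <- s) ball y (e y)) = mu2 (\big[setU/set0]_(y <- s) ball y (e y)).
Proof.
move=> e_gt0; set W := \big[setU/set0]_(y <- s) _.
have mW : measurable (W : set T).
  by apply: bigsetU_measurable => y _; apply: sub_sigma_algebra; exact: ball_open.
rewrite (measure_setIr_null_setC mX mu1XC mW) (measure_setIr_null_setC mX mu2XC mW).
rewrite -!(integral_indic _ mX mW); apply: integral_exp_poly_limit_eq.
by apply: exp_poly_limit_bigsetU => y; exact: exp_poly_limit_ball.
Qed.

Lemma measure_eq_of_halfspace_eq : regular_measure mu1 -> regular_measure mu2 ->
  forall A : set T, measurable A -> mu1 A = mu2 A.
Proof.
move=> mu1_reg mu2_reg.
have open_eq U : open U -> mu1 U = mu2 U.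
  move=> oU; apply/le_anti/andP; split; apply: regular_open_le => // s e e_gt0.
    exact: measure_bigsetU_ball_eq.
  exact/esym/measure_bigsetU_ball_eq.
move=> A mA.
apply: (@g_sigma_algebra_measure_unique _ R T (@open _) _ (fun=> setT)) => //.
- by move=> U oU; exact: sub_sigma_algebra.
- by move=> _; exact: openT.
- by rewrite bigcup_const.
- exact: openI.
- by move=> _; rewrite ltey_eq fin_num_measure.
Qed.

End halfspaces_determine.
End measures_on_compact.

Lemma sigmoidal_continuous_bounded (R : realType) (sigma : R -> R) :
  continuous sigma -> sigmoidal sigma -> exists M : R, forall t, `|sigma t| <= M.
Proof.
move=> csigma [sigma_y sigma_Ny].
have norm1_lt2 : `|1 : R| < 2 by rewrite normr1 ltr1n.
have norm0_lt1 : `|0 : R| < 1 by rewrite normr0.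
have [a [_ sigma_gt_a]] := cvgr_norm_le _ sigma_y 2 norm1_lt2.
have [b [_ sigma_lt_b]] := cvgr_norm_le _ sigma_Ny 1 norm0_lt1.
have [M sigmaM] := compact_continuous_bounded (@segment_compact _ b a) csigma.
exists (`|M| + 2) => t; have := normr_ge0 M; have := ler_norm M.
have [at_|ta] := ltrP a t; first by have /= := sigma_gt_a t at_; lra.
have [tb|bt] := ltrP t b; first by have /= := sigma_lt_b t tb; lra.
by have := sigmaM t; rewrite /= in_itv /= bt ta => /(_ isT); lra.
Qed.

Lemma bounded_sigmoidal_discriminatory (R : realType) (r : nat) (sigma : R -> R) :
  (exists M : R, forall t, `|sigma t| <= M) -> measurable_fun [set: R] sigma ->
  sigmoidal sigma -> discriminatory r sigma.
Proof.
move=> sigmaM msigma ssigma X _ cX mu1 mu2 mu1_reg mu2_reg mu1XC mu2XC hsigma.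
apply: (measure_eq_of_halfspace_eq cX mu1XC mu2XC _ mu1_reg mu2_reg).
exact: (sigmoidal_halfspace_eq cX mu1XC mu2XC sigmaM msigma ssigma hsigma).
Qed.

Theorem lemma4p2p4 (R : realType) (r : nat) :
  (forall sigma : R -> R,
     (exists M : R, forall t, `|sigma t| <= M) ->
     measurable_fun [set: R] sigma ->
     sigmoidal sigma -> discriminatory r sigma) /\
  (forall sigma : R -> R,
     continuous sigma -> sigmoidal sigma -> discriminatory r sigma).
Proof.
split=> [|sigma csigma ssigma]; first exact: bounded_sigmoidal_discriminatory.
apply: bounded_sigmoidal_discriminatory => //.
- exact: sigmoidal_continuous_bounded.
- exact: continuous_measurable_fun.
Qed.
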